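(* Let $\sigma\in\{+1,-1\}$ and consider the ODE $$(a^2-1)Q''(a)+\Big(\tfrac83a-\tfrac2a\Big)Q'(a)+\tfrac49Q(a)+\sigma Q(a)^7=0.\qquad(\ast)$$ There exists $\varepsilon>0$ small such that for any $0\le q_0\le\varepsilon$, $(\ast)$ admits a unique smooth solution on $[0,\frac12]$ with $Q(0)=q_0$, $Q'(0)=0$. Moreover, $$Q(1/2)=q_0Q_0(1/2)+O(q_0^7),\qquad Q'(1/2)=q_0Q_0'(1/2)+O(q_0^7),$$ where $Q_0(a):=\frac34\big(\varphi_2(a)-\varphi_1(a)\big)$ with $\varphi_1(a)=a^{-1}(1-a)^{\frac23}$, $\varphi_2(a)=a^{-1}(1+a)^{\frac23}$, and the solution extends as a smooth even function to the interval $[-\frac12,\frac12]$.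
   Context: The function $Q_0$ is analytic and even near $a=0$ with $Q_0(0)=1$; $\varphi_1,\varphi_2$ form a fundamental system of the linear part of $(\ast)$. $O(q_0^7)$ denotes a quantity bounded by an absolute constant times $q_0^7$. *)

From Stdlib Require Import Reals Lra.
From Coquelicot Require Import Coquelicot.
Open Scope R_scope.

Definition has_deriv_on (a b : R) (f f' : R -> R) : Prop :=
  forall x, a <= x <= b ->
  forall eps, 0 < eps -> exists delta, 0 < delta /\
    forall y, a <= y <= b -> Rabs (y - x) < delta ->
      Rabs (f y - f x - f' x * (y - x)) <= eps * Rabs (y - x).

Definition smooth_on (a b : R) (f : R -> R) : Prop :=
  exists F : nat -> R -> R,
    (forall x, a <= x <= b -> F O x = f x) /\
    forall n, has_deriv_on a b (F n) (F (S n)).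

(* Q is a smooth solution of ( * ) on [0,1/2] with Q(0)=q0, Q'(0)=0;
   the equation is imposed where it makes sense, i.e. for 0 < a <= 1/2. *)
Definition is_solution (sigma q0 : R) (Q : R -> R) : Prop :=
  smooth_on 0 (1/2) Q /\
  exists Q1 Q2 : R -> R,
    has_deriv_on 0 (1/2) Q Q1 /\ has_deriv_on 0 (1/2) Q1 Q2 /\
    Q 0 = q0 /\ Q1 0 = 0 /\
    forall a, 0 < a <= 1/2 ->
      (a ^ 2 - 1) * Q2 a + (8/3 * a - 2 / a) * Q1 a + 4/9 * Q a
        + sigma * Q a ^ 7 = 0.

Definition phi1 (a : R) : R := / a * Rpower (1 - a) (2/3).
Definition phi2 (a : R) : R := / a * Rpower (1 + a) (2/3).
Definition Q0 (a : R) : R := 3/4 * (phi2 a - phi1 a).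

(* Substituting x = a^2 turns ( * ) into an equation for P(x) = Q(a) with a regular singular point
   at x = 0, whose power series coefficients obey a first-order recursion. Weighted majorants
   q0 3^j / (j+1)^2 show that for q0 <= 1/8 the series converges for |x| < 1/3, i.e. |a| < 4/7,
   which gives an even smooth solution, and that its coefficients differ from q0 times those of
   the linearized problem by O(q0^7) in the same norm. The linearized solution is Q0, as one sees
   from the binomial series of (1 +- a)^(2/3). Uniqueness is a Gronwall argument for (a^2 D')',
   where D is the difference of two solutions. *)

From Stdlib Require Import Reals Lra Psatz.
From Coquelicot Require Import Coquelicot.
Open Scope R_scope.

(** * Calculus on closed intervals *)

Definition cont_on (a b : R) (f : R -> R) : Prop :=
  forall x, a <= x <= b -> forall e, 0 < e -> exists d, 0 < d /\
    forall y, a <= y <= b -> Rabs (y - x) < d -> Rabs (f y - f x) < e.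

Lemma has_deriv_on_cont_on a b f f' : has_deriv_on a b f f' -> cont_on a b f.
Proof.
  intros H x Hx e He.
  destruct (H x Hx 1 Rlt_0_1) as [d [Hd Hy]].
  set (K := Rabs (f' x) + 1).
  assert (HK : 0 < K) by (unfold K; pose proof (Rabs_pos (f' x)); lra).
  exists (Rmin d (e / K)); split.
  { apply Rmin_pos; auto. apply Rdiv_lt_0_compat; lra. }
  intros y Hy1 Hy2.
  assert (H1 : Rabs (y - x) < d) by (eapply Rlt_le_trans; [apply Hy2| apply Rmin_l]).
  assert (H2 : Rabs (y - x) < e / K) by (eapply Rlt_le_trans; [apply Hy2| apply Rmin_r]).
  specialize (Hy y Hy1 H1).
  assert (Rabs (f y - f x) <= K * Rabs (y - x)).
  { replace (f y - f x) with ((f y - f x - f' x * (y - x)) + f' x * (y - x)) by ring.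
    eapply Rle_trans; [apply Rabs_triang|]. rewrite Rabs_mult. unfold K. lra. }
  assert (K * Rabs (y - x) < e).
  { apply (Rmult_lt_compat_l K) in H2; auto.
    replace (K * (e / K)) with e in H2 by (field; lra). lra. }
  lra.
Qed.

(* Functions on [a,b] are extended constantly outside [a,b] through [clamp],
   which turns continuity within [a,b] into continuity on R. *)
Definition clamp (a b x : R) := Rmax a (Rmin b x).

Lemma clamp_in a b x : a <= b -> a <= clamp a b x <= b.
Proof. intros. unfold clamp, Rmax, Rmin. repeat destruct Rle_dec; lra. Qed.

Lemma clamp_id a b x : a <= x <= b -> clamp a b x = x.
Proof. intros. unfold clamp, Rmax, Rmin. repeat destruct Rle_dec; lra. Qed.

Lemma clamp_lipschitz a b x y : a <= b -> Rabs (clamp a b y - clamp a b x) <= Rabs (y - x).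
Proof.
  intros. unfold clamp, Rmax, Rmin. repeat destruct Rle_dec;
  unfold Rabs; repeat destruct Rcase_abs; lra.
Qed.

Lemma continuity_pt_clamp a b f : a <= b -> cont_on a b f ->
  forall x, continuity_pt (fun y => f (clamp a b y)) x.
Proof.
  intros Hab H x. unfold continuity_pt, continue_in, limit1_in, limit_in; simpl.
  unfold R_dist. intros e He.
  destruct (H (clamp a b x) (clamp_in a b x Hab) e He) as [d [Hd Hy]].
  exists d; split; auto. intros y [_ Hy2].
  apply Hy; [apply clamp_in; auto|].
  eapply Rle_lt_trans; [apply clamp_lipschitz; auto| auto].
Qed.

Lemma continuity_pt_clamp_id a b x : a <= b -> continuity_pt (clamp a b) x.
Proof.
  intros Hab. apply (continuity_pt_clamp a b (fun s => s) Hab).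
  intros y _ e He. exists e. split; auto.
Qed.

Lemma interval_max a b f : a <= b -> (forall x, continuity_pt (fun y => f (clamp a b y)) x) ->
  exists c, a <= c <= b /\ forall x, a <= x <= b -> f x <= f c.
Proof.
  intros Hab Hf.
  destruct (continuity_ab_maj (fun y => f (clamp a b y)) a b Hab) as [c [Hc Hcab]].
  { intros x _. apply Hf. }
  exists c. split; auto. intros x Hx. specialize (Hc x Hx).
  rewrite !clamp_id in Hc by auto. auto.
Qed.

Lemma cont_on_bounded a b f : a <= b -> cont_on a b f ->
  exists M, 0 <= M /\ forall x, a <= x <= b -> Rabs (f x) <= M.
Proof.
  intros Hab Hf.
  destruct (interval_max a b (fun x => Rabs (f x)) Hab) as [c [Hc Hmax]].
  { intros x. apply (continuity_pt_comp (fun y => f (clamp a b y)) Rabs).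
    - apply continuity_pt_clamp; auto.
    - apply Rcontinuity_abs. }
  exists (Rabs (f c)). split; [apply Rabs_pos | auto].
Qed.

Lemma derivable_pt_lim_clamp a b f f' x : has_deriv_on a b f f' -> a < x < b ->
  derivable_pt_lim (fun y => f (clamp a b y)) x (f' x).
Proof.
  intros H Hx eps He.
  destruct (H x ltac:(lra) (eps/2) ltac:(lra)) as [d [Hd Hy]].
  assert (Hp : 0 < Rmin d (Rmin (x - a) (b - x))) by (repeat apply Rmin_pos; lra).
  exists (mkposreal _ Hp). intros h Hh0 Hh. simpl in Hh.
  assert (h1 : Rabs h < d) by (eapply Rlt_le_trans; [apply Hh| apply Rmin_l]).
  assert (h2 : Rabs h < Rmin (x - a) (b - x)) by (eapply Rlt_le_trans; [apply Hh| apply Rmin_r]).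
  assert (h3 : Rabs h < x - a) by (eapply Rlt_le_trans; [apply h2| apply Rmin_l]).
  assert (h4 : Rabs h < b - x) by (eapply Rlt_le_trans; [apply h2| apply Rmin_r]).
  assert (Hin : a <= x + h <= b) by (unfold Rabs in *; destruct Rcase_abs; lra).
  rewrite (clamp_id a b (x+h) Hin), (clamp_id a b x) by lra.
  specialize (Hy (x + h) Hin). replace (x + h - x) with h in Hy by ring.
  specialize (Hy h1).
  replace ((f (x + h) - f x) / h - f' x) with ((f (x + h) - f x - f' x * h) / h) by (field; auto).
  assert (0 < Rabs h) by (apply Rabs_pos_lt; auto).
  rewrite Rabs_div by auto.
  apply (Rmult_lt_reg_r (Rabs h)); auto.
  unfold Rdiv. rewrite Rmult_assoc, Rinv_l by lra. nra.
Qed.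

Lemma has_deriv_on_MVT a b f f' : a < b -> has_deriv_on a b f f' ->
  exists c, a <= c <= b /\ f b - f a = f' c * (b - a).
Proof.
  intros Hab H.
  destruct (MVT_gen (fun y => f (clamp a b y)) a b f') as [c [Hc Heq]].
  - intros x Hx. rewrite Rmin_left, Rmax_right in Hx by lra.
    apply is_derive_Reals. apply derivable_pt_lim_clamp; auto.
  - intros x _. apply continuity_pt_clamp; [lra|]. eapply has_deriv_on_cont_on; eauto.
  - rewrite Rmin_left, Rmax_right in Hc by lra. exists c; split; auto.
    rewrite (clamp_id a b a), (clamp_id a b b) in Heq by lra. auto.
Qed.

Lemma has_deriv_on_opp a b f f' : has_deriv_on a b f f' ->
  has_deriv_on a b (fun x => - f x) (fun x => - f' x).
Proof.
  intros Hf x Hx eps He. destruct (Hf x Hx eps He) as [d [Hd H]].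
  exists d; split; auto. intros y Hy Hyx.
  replace (- f y - - f x - - f' x * (y - x)) with (- (f y - f x - f' x * (y - x))) by ring.
  rewrite Rabs_Ropp. auto.
Qed.

Lemma has_deriv_on_minus a b f f' g g' : has_deriv_on a b f f' -> has_deriv_on a b g g' ->
  has_deriv_on a b (fun x => f x - g x) (fun x => f' x - g' x).
Proof.
  intros Hf Hg x Hx eps He.
  destruct (Hf x Hx (eps/2)) as [d1 [Hd1 H1]]; [lra|].
  destruct (Hg x Hx (eps/2)) as [d2 [Hd2 H2]]; [lra|].
  exists (Rmin d1 d2); split; [apply Rmin_pos; auto|].
  intros y Hy Hyx.
  specialize (H1 y Hy (Rlt_le_trans _ _ _ Hyx (Rmin_l _ _))).
  specialize (H2 y Hy (Rlt_le_trans _ _ _ Hyx (Rmin_r _ _))).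
  replace (f y - g y - (f x - g x) - (f' x - g' x) * (y - x)) with
    ((f y - f x - f' x * (y - x)) - (g y - g x - g' x * (y - x))) by ring.
  eapply Rle_trans; [apply Rabs_triang|]. rewrite Rabs_Ropp. lra.
Qed.

Lemma Rabs_mult_le_scaled p q K e u : 0 < K -> 0 <= u ->
  Rabs p <= K -> Rabs q <= e / K * u -> Rabs (p * q) <= e * u.
Proof.
  intros HK Hu Hp Hq. rewrite Rabs_mult.
  apply Rle_trans with (K * (e / K * u)); [apply Rmult_le_compat; auto using Rabs_pos|].
  right. field. lra.
Qed.

Lemma has_deriv_on_mult a b f f' g g' : has_deriv_on a b f f' -> has_deriv_on a b g g' ->
  has_deriv_on a b (fun x => f x * g x) (fun x => f' x * g x + f x * g' x).
Proof.
  intros Hf Hg x Hx eps He.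
  set (A := Rabs (g x) + 1). set (B := Rabs (f' x) + 1). set (C := Rabs (f x) + 1).
  assert (HA : 0 < A) by (unfold A; pose proof (Rabs_pos (g x)); lra).
  assert (HB : 0 < B) by (unfold B; pose proof (Rabs_pos (f' x)); lra).
  assert (HC : 0 < C) by (unfold C; pose proof (Rabs_pos (f x)); lra).
  destruct (Hf x Hx (eps / 3 / A)) as [d1 [Hd1 H1]]; [apply Rdiv_lt_0_compat; lra|].
  destruct (has_deriv_on_cont_on a b g g' Hg x Hx (Rmin 1 (eps / 3 / B))) as [d2 [Hd2 H2]];
    [apply Rmin_pos; [lra|apply Rdiv_lt_0_compat; lra]|].
  destruct (Hg x Hx (eps / 3 / C)) as [d3 [Hd3 H3]]; [apply Rdiv_lt_0_compat; lra|].
  exists (Rmin d1 (Rmin d2 d3)); split; [repeat apply Rmin_pos; auto|].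
  intros y Hy Hyx.
  pose proof (Rmin_l d1 (Rmin d2 d3)). pose proof (Rmin_r d1 (Rmin d2 d3)).
  pose proof (Rmin_l d2 d3). pose proof (Rmin_r d2 d3).
  specialize (H1 y Hy ltac:(lra)). specialize (H2 y Hy ltac:(lra)). specialize (H3 y Hy ltac:(lra)).
  pose proof (Rmin_l 1 (eps / 3 / B)). pose proof (Rmin_r 1 (eps / 3 / B)).
  set (u := Rabs (y - x)) in *. assert (Hu : 0 <= u) by apply Rabs_pos.
  replace (f y * g y - f x * g x - (f' x * g x + f x * g' x) * (y - x)) with
    (g y * (f y - f x - f' x * (y - x)) + f' x * ((y - x) * (g y - g x))
     + f x * (g y - g x - g' x * (y - x))) by ring.
  assert (T1 : Rabs (g y * (f y - f x - f' x * (y - x))) <= eps / 3 * u).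
  { apply (Rabs_mult_le_scaled _ _ A); auto. unfold A.
    replace (g y) with ((g y - g x) + g x) by ring.
    eapply Rle_trans; [apply Rabs_triang|]. lra. }
  assert (T2 : Rabs (f' x * ((y - x) * (g y - g x))) <= eps / 3 * u).
  { apply (Rabs_mult_le_scaled _ _ B); auto; [unfold B; lra|].
    rewrite Rabs_mult. fold u. rewrite Rmult_comm. apply Rmult_le_compat_r; lra. }
  assert (T3 : Rabs (f x * (g y - g x - g' x * (y - x))) <= eps / 3 * u).
  { apply (Rabs_mult_le_scaled _ _ C); auto. unfold C; lra. }
  eapply Rle_trans; [apply Rabs_triang|].
  eapply Rle_trans; [apply Rplus_le_compat_r; apply Rabs_triang|]. lra.
Qed.

Lemma has_deriv_on_ext a b f f' g g' : has_deriv_on a b f f' ->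
  (forall x, a <= x <= b -> f x = g x) -> (forall x, a <= x <= b -> f' x = g' x) ->
  has_deriv_on a b g g'.
Proof.
  intros H E E' x Hx eps He. destruct (H x Hx eps He) as [d [Hd H1]].
  exists d; split; auto. intros y Hy Hyx. rewrite <- (E y Hy), <- (E x Hx), <- (E' x Hx). auto.
Qed.

Lemma has_deriv_on_subinterval a b c d f f' : a <= c -> d <= b ->
  has_deriv_on a b f f' -> has_deriv_on c d f f'.
Proof.
  intros H1 H2 H x Hx eps He. destruct (H x ltac:(lra) eps He) as [e [He' H3]].
  exists e; split; auto. intros y Hy Hyx. apply H3; auto; lra.
Qed.

Lemma has_deriv_on_derivable a b f f' :
  (forall x, a <= x <= b -> derivable_pt_lim f x (f' x)) -> has_deriv_on a b f f'.
Proof.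
  intros H x Hx eps He. destruct (H x Hx eps He) as [d Hd].
  exists d; split; [apply cond_pos|]. intros y Hy Hyx.
  destruct (Req_dec y x) as [->|Hne].
  { rewrite !Rminus_eq_0, Rmult_0_r, Rminus_0_r, !Rabs_R0. lra. }
  specialize (Hd (y - x) ltac:(lra) Hyx). replace (x + (y - x)) with y in Hd by ring.
  replace (f y - f x - f' x * (y - x)) with (((f y - f x) / (y - x) - f' x) * (y - x))
    by (field; lra).
  rewrite Rabs_mult. apply Rmult_le_compat_r; [apply Rabs_pos| lra].
Qed.

Lemma has_deriv_on_is_derive a b f f' :
  (forall x, a <= x <= b -> is_derive f x (f' x)) -> has_deriv_on a b f f'.
Proof. intros H. apply has_deriv_on_derivable. intros x Hx. apply is_derive_Reals, H, Hx. Qed.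

Lemma has_deriv_on_le a b f f' g g' : a <= b -> has_deriv_on a b f f' -> has_deriv_on a b g g' ->
  (forall x, a <= x <= b -> f' x <= g' x) -> f b - f a <= g b - g a.
Proof.
  intros Hab Hf Hg Hle. destruct (Req_dec a b) as [->|Hne]; [lra|].
  destruct (has_deriv_on_MVT a b _ _ ltac:(lra) (has_deriv_on_minus a b f f' g g' Hf Hg))
    as [c [Hc Heq]].
  specialize (Hle c Hc). assert ((f' c - g' c) * (b - a) <= 0) by (apply Rmult_le_0_r; lra).
  lra.
Qed.

Lemma has_deriv_on_Rabs_le a b f f' g g' : a <= b ->
  has_deriv_on a b f f' -> has_deriv_on a b g g' ->
  (forall x, a <= x <= b -> Rabs (f' x) <= g' x) -> f a = 0 -> Rabs (f b) <= g b - g a.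
Proof.
  intros Hab Hf Hg Hle H0.
  assert (A1 : f b - f a <= g b - g a).
  { apply (has_deriv_on_le a b f f' g g'); auto.
    intros x Hx. specialize (Hle x Hx). pose proof (Rle_abs (f' x)). lra. }
  assert (A2 : - f b - - f a <= g b - g a).
  { apply (has_deriv_on_le a b _ _ g g' Hab (has_deriv_on_opp a b f f' Hf) Hg).
    intros x Hx. specialize (Hle x Hx). rewrite <- Rabs_Ropp in Hle.
    pose proof (Rle_abs (- f' x)). lra. }
  apply Rabs_le. lra.
Qed.

Lemma has_deriv_on_unique a b f f1 f2 x : a < b ->
  has_deriv_on a b f f1 -> has_deriv_on a b f f2 -> a <= x <= b -> f1 x = f2 x.
Proof.
  intros Hab H1 H2 Hx. destruct (Req_dec (f1 x) (f2 x)) as [E|Hne]; auto. exfalso.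
  set (dd := Rabs (f1 x - f2 x)). assert (Hdd : 0 < dd) by (apply Rabs_pos_lt; lra).
  destruct (H1 x Hx (dd/4)) as [d1 [Hd1 G1]]; [lra|].
  destruct (H2 x Hx (dd/4)) as [d2 [Hd2 G2]]; [lra|].
  set (t := Rmin (Rmin d1 d2) (b - a) / 2).
  pose proof (Rmin_l (Rmin d1 d2) (b - a)). pose proof (Rmin_r (Rmin d1 d2) (b - a)).
  pose proof (Rmin_l d1 d2). pose proof (Rmin_r d1 d2).
  assert (Ht : 0 < t) by (unfold t; apply Rdiv_lt_0_compat; [repeat apply Rmin_pos|]; lra).
  assert (exists y, a <= y <= b /\ Rabs (y - x) = t) as [y [Hy Hyx]].
  { destruct (Rle_dec (x + t) b).
    - exists (x + t). split; [lra|]. replace (x + t - x) with t by ring. apply Rabs_right; lra.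
    - exists (x - t). split; [unfold t in *; lra|].
      replace (x - t - x) with (- t) by ring. rewrite Rabs_Ropp. apply Rabs_right; lra. }
  specialize (G1 y Hy ltac:(unfold t in *; lra)). specialize (G2 y Hy ltac:(unfold t in *; lra)).
  assert (Hsum : Rabs ((f1 x - f2 x) * (y - x)) <= dd / 2 * Rabs (y - x)).
  { replace ((f1 x - f2 x) * (y - x)) with
      ((f y - f x - f2 x * (y - x)) - (f y - f x - f1 x * (y - x))) by ring.
    eapply Rle_trans; [apply Rabs_triang|]. rewrite Rabs_Ropp. lra. }
  rewrite Rabs_mult in Hsum. fold dd in Hsum. rewrite Hyx in Hsum. nra.
Qed.

(** * Uniqueness *)

Lemma Rabs_pow_sub_le x y B n : Rabs x <= B -> Rabs y <= B ->
  Rabs (x ^ S n - y ^ S n) <= INR (S n) * B ^ n * Rabs (x - y).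
Proof.
  intros Hx Hy. assert (HB : 0 <= B) by (pose proof (Rabs_pos x); lra).
  induction n.
  - replace (x ^ 1 - y ^ 1) with (x - y) by ring. simpl. lra.
  - replace (x ^ S (S n) - y ^ S (S n)) with (x * (x ^ S n - y ^ S n) + y ^ S n * (x - y))
      by (simpl; ring).
    eapply Rle_trans; [apply Rabs_triang|]. rewrite !Rabs_mult.
    assert (Rabs (y ^ S n) <= B ^ S n)
      by (rewrite <- RPow_abs; apply pow_incr; split; [apply Rabs_pos|auto]).
    assert (Rabs x * Rabs (x ^ S n - y ^ S n) <= B * (INR (S n) * B ^ n * Rabs (x - y)))
      by (apply Rmult_le_compat; auto using Rabs_pos).
    pose proof (Rabs_pos (x - y)).
    assert (Rabs (y ^ S n) * Rabs (x - y) <= B ^ S n * Rabs (x - y))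
      by (apply Rmult_le_compat_r; auto).
    rewrite S_INR. simpl pow in *. nra.
Qed.

(* A Gronwall argument adapted to the singular point 0: the exponential weight absorbs the
   right-hand side, and integrating [(s^2 D1)'] from 0 gains the factor [s] that makes the weighted
   maximum of [D1] at most [c] times itself. *)
Section Singular_Gronwall.

Variables (c A : R) (D D1 h : R -> R).
Hypotheses (Hc : 0 <= c < 1) (HA : 0 <= A)
  (HD : has_deriv_on 0 c D D1) (HD1 : cont_on 0 c D1) (Hh : has_deriv_on 0 c (fun s => s ^ 2 * D1 s) h)
  (HD0 : D 0 = 0) (HD10 : D1 0 = 0)
  (Hbound : forall s, 0 <= s <= c -> Rabs (h s) <= A * (s ^ 3 * Rabs (D1 s) + s ^ 2 * Rabs (D s))).

Let K := 2 * A.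

Lemma exp_weighted_max :
  exists m, 0 <= m /\ (exists s0, 0 <= s0 <= c /\ m = exp (- K * s0) * Rabs (D1 s0)) /\
    forall s, 0 <= s <= c -> Rabs (D1 s) <= m * exp (K * s).
Proof.
  destruct (interval_max 0 c (fun s => exp (- K * s) * Rabs (D1 s)) ltac:(lra)) as [s0 [Hs0 Hmax]].
  { intros x. apply (continuity_pt_mult (fun y => exp (- K * clamp 0 c y))
                                        (fun y => Rabs (D1 (clamp 0 c y)))).
    - apply (continuity_pt_comp (fun y => - K * clamp 0 c y) exp).
      + apply (continuity_pt_mult (fun _ => - K) (clamp 0 c));
          [apply continuity_pt_const; intros ? ?; auto | apply continuity_pt_clamp_id; lra].
      + apply derivable_continuous_pt, derivable_pt_exp.
    - apply (continuity_pt_comp (fun y => D1 (clamp 0 c y)) Rabs); [|apply Rcontinuity_abs].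
      apply continuity_pt_clamp; [lra|auto]. }
  exists (exp (- K * s0) * Rabs (D1 s0)). split; [|split].
  - apply Rmult_le_pos; [left; apply exp_pos | apply Rabs_pos].
  - exists s0; auto.
  - intros s Hs. specialize (Hmax s Hs).
    replace (Rabs (D1 s)) with (exp (- K * s) * Rabs (D1 s) * exp (K * s)).
    + apply Rmult_le_compat_r; [left; apply exp_pos | auto].
    + rewrite Rmult_comm, <- Rmult_assoc, <- exp_plus. replace (K * s + - K * s) with 0 by ring.
      rewrite exp_0. ring.
Qed.

Section Weighted_bounds.

Variable m : R.
Hypotheses (Hm : 0 <= m) (HD1m : forall s, 0 <= s <= c -> Rabs (D1 s) <= m * exp (K * s)).

Lemma weighted_bound_D t : 0 <= t <= c -> Rabs (D t) <= m * t * exp (K * t).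
Proof.
  intros Ht.
  assert (A0 := has_deriv_on_Rabs_le 0 t D D1 (fun s => m * s * exp (K * s))
     (fun s => m * (exp (K * s) + K * s * exp (K * s))) ltac:(lra)
     (has_deriv_on_subinterval 0 c 0 t _ _ ltac:(lra) ltac:(lra) HD)).
  replace (m * t * exp (K * t)) with (m * t * exp (K * t) - m * 0 * exp (K * 0)) by ring.
  apply A0; auto.
  - apply has_deriv_on_is_derive. intros x _. auto_derive; auto. ring.
  - intros s Hs. eapply Rle_trans; [apply HD1m; lra|].
    assert (0 <= K * s * exp (K * s)) by (apply Rmult_le_pos; [unfold K; nra| left; apply exp_pos]).
    nra.
Qed.

Lemma weighted_bound_h s : 0 <= s <= c -> Rabs (h s) <= K * m * s ^ 3 * exp (K * s).
Proof.
  intros Hs. eapply Rle_trans; [apply Hbound; auto|].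
  pose proof (HD1m s Hs). pose proof (weighted_bound_D s Hs).
  assert (0 <= s ^ 2) by (apply pow_le; lra). assert (0 <= s ^ 3) by (apply pow_le; lra).
  assert (s ^ 3 * Rabs (D1 s) <= s ^ 3 * (m * exp (K * s))) by (apply Rmult_le_compat_l; auto).
  assert (s ^ 2 * Rabs (D s) <= s ^ 2 * (m * s * exp (K * s))) by (apply Rmult_le_compat_l; auto).
  replace (K * m * s ^ 3 * exp (K * s))
    with (A * (s ^ 3 * (m * exp (K * s)) + s ^ 2 * (m * s * exp (K * s)))) by (unfold K; ring).
  apply Rmult_le_compat_l; lra.
Qed.

Lemma weighted_bound_D1 t : 0 <= t <= c -> exp (- K * t) * Rabs (D1 t) <= m * c.
Proof.
  intros Ht. assert (0 <= m * c) by nra.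
  destruct (Req_dec t 0) as [->|Ht0].
  { rewrite HD10, Rabs_R0, Rmult_0_r. auto. }
  assert (A0 := has_deriv_on_Rabs_le 0 t (fun s => s ^ 2 * D1 s) h
     (fun s => m * s ^ 3 * exp (K * s))
     (fun s => m * (3 * s ^ 2 * exp (K * s) + K * s ^ 3 * exp (K * s))) ltac:(lra)
     (has_deriv_on_subinterval 0 c 0 t _ _ ltac:(lra) ltac:(lra) Hh)).
  assert (A1 : Rabs (t ^ 2 * D1 t) <= m * t ^ 3 * exp (K * t)).
  { replace (m * t ^ 3 * exp (K * t)) with
      (m * t ^ 3 * exp (K * t) - m * 0 ^ 3 * exp (K * 0)) by ring.
    apply A0; [| |ring].
    - apply has_deriv_on_is_derive. intros x _. auto_derive; auto. ring.
    - intros s Hs. eapply Rle_trans; [apply weighted_bound_h; lra|].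
      assert (0 <= 3 * s ^ 2 * exp (K * s))
        by (apply Rmult_le_pos; [apply Rmult_le_pos; [lra|apply pow_le; lra]|left; apply exp_pos]).
      nra. }
  rewrite Rabs_mult, (Rabs_right (t ^ 2)) in A1 by nra.
  assert (Rabs (D1 t) <= m * t * exp (K * t)) by (apply Rmult_le_reg_l with (t ^ 2); nra).
  assert (He : exp (- K * t) * exp (K * t) = 1).
  { rewrite <- exp_plus. replace (- K * t + K * t) with 0 by ring. apply exp_0. }
  assert (0 < exp (- K * t)) by apply exp_pos.
  apply Rle_trans with (exp (- K * t) * (m * t * exp (K * t))).
  - apply Rmult_le_compat_l; lra.
  - replace (exp (- K * t) * (m * t * exp (K * t))) with (m * t * (exp (- K * t) * exp (K * t)))
      by ring.
    rewrite He. nra.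
Qed.

End Weighted_bounds.

Lemma singular_gronwall s : 0 <= s <= c -> D s = 0.
Proof.
  intros Hs.
  destruct exp_weighted_max as [m [Hm [[s0 [Hs0 Hms0]] HD1m]]].
  assert (Hm0 : m = 0) by (pose proof (weighted_bound_D1 m Hm HD1m s0 Hs0); nra).
  pose proof (weighted_bound_D m Hm HD1m s Hs) as HDs.
  rewrite Hm0, !Rmult_0_l in HDs. apply Rabs_eq_0. pose proof (Rabs_pos (D s)). lra.
Qed.

End Singular_Gronwall.

(* Multiplying the equation by a^2/(a^2 - 1) shows that the singular operator
   (a^2 - 1) y'' + (8/3 a - 2/a) y' is (a^2 y')' up to a term of order a^3 y'. *)
Lemma radial_identity s y1 y2 g : 0 < s < 1 ->
  (s ^ 2 - 1) * y2 + (8/3 * s - 2 / s) * y1 + g = 0 ->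
  2 * s * y1 + s ^ 2 * y2 = (2/3 * s ^ 3 * y1 + s ^ 2 * g) / (1 - s ^ 2).
Proof.
  intros Hs E.
  replace (2 * s * y1 + s ^ 2 * y2) with
    ((2/3 * s ^ 3 * y1 + s ^ 2 * g) / (1 - s ^ 2)
     - s ^ 2 * ((s ^ 2 - 1) * y2 + (8/3 * s - 2 / s) * y1 + g) / (1 - s ^ 2))
    by (field; split; [lra | nra]).
  rewrite E. field. nra.
Qed.

Lemma Rabs_nonlinearity_sub_le sigma x y B : Rabs x <= B -> Rabs y <= B ->
  Rabs (4/9 * (x - y) + sigma * (x ^ 7 - y ^ 7))
    <= (4/9 + Rabs sigma * (INR 7 * B ^ 6)) * Rabs (x - y).
Proof.
  intros Hx Hy. pose proof (Rabs_pow_sub_le x y B 6 Hx Hy).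
  eapply Rle_trans; [apply Rabs_triang|]. rewrite !Rabs_mult, (Rabs_right (4/9)) by lra.
  pose proof (Rabs_pos sigma). pose proof (Rabs_pos (x - y)). nra.
Qed.

Lemma Rabs_radial_remainder_le s d d1 g L : 0 <= s <= 1/2 -> 0 <= L ->
  Rabs g <= L * Rabs d ->
  Rabs ((2/3 * s ^ 3 * d1 + s ^ 2 * g) / (1 - s ^ 2))
    <= 4/3 * (2/3 + L) * (s ^ 3 * Rabs d1 + s ^ 2 * Rabs d).
Proof.
  intros Hs HL Hg.
  assert (0 <= s ^ 2) by (apply pow_le; lra). assert (0 <= s ^ 3) by (apply pow_le; lra).
  rewrite Rabs_div, (Rabs_right (1 - s ^ 2)) by nra.
  apply Rmult_le_reg_r with (1 - s ^ 2); [nra|].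
  unfold Rdiv. rewrite Rmult_assoc, Rinv_l, Rmult_1_r by nra.
  eapply Rle_trans; [apply Rabs_triang|].
  rewrite (Rabs_mult (2/3 * s ^ 3)), (Rabs_mult (s ^ 2)), (Rabs_right (2/3 * s ^ 3)),
    (Rabs_right (s ^ 2)) by nra.
  pose proof (Rabs_pos d1). pose proof (Rabs_pos d).
  assert (s ^ 2 * Rabs g <= s ^ 2 * (L * Rabs d)) by (apply Rmult_le_compat_l; auto).
  assert (0 <= s ^ 3 * Rabs d1) by nra. assert (0 <= s ^ 2 * Rabs d) by nra.
  set (X := s ^ 3 * Rabs d1) in *. set (Y := s ^ 2 * Rabs d) in *.
  assert ((2/3 + L) * (X + Y) <= (2/3 + L) * (X + Y) * (4/3 * (1 - s ^ 2)))
    by (rewrite <- (Rmult_1_r ((2/3 + L) * (X + Y))) at 1; apply Rmult_le_compat_l; nra).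
  replace (2/3 * s ^ 3 * Rabs d1) with (2/3 * X) by (unfold X; ring).
  replace (s ^ 2 * (L * Rabs d)) with (L * Y) in * by (unfold Y; ring).
  nra.
Qed.

Theorem is_solution_unique sigma q0 Q P : is_solution sigma q0 Q -> is_solution sigma q0 P ->
  forall a, 0 <= a <= 1/2 -> P a = Q a.
Proof.
  intros [_ [Q1 [Q2 [HQ1 [HQ2 [HQ0 [HQ10 HQe]]]]]]] [_ [P1 [P2 [HP1 [HP2 [HP0 [HP10 HPe]]]]]]].
  destruct (cont_on_bounded 0 (1/2) Q ltac:(lra) (has_deriv_on_cont_on _ _ _ _ HQ1))
    as [BQ [HBQ0 HBQ]].
  destruct (cont_on_bounded 0 (1/2) P ltac:(lra) (has_deriv_on_cont_on _ _ _ _ HP1))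
    as [BP [HBP0 HBP]].
  set (L := 4/9 + Rabs sigma * (INR 7 * (BQ + BP) ^ 6)).
  assert (HL : 0 <= L).
  { unfold L. pose proof (Rabs_pos sigma). assert (0 <= (BQ + BP) ^ 6) by (apply pow_le; lra).
    simpl INR. nra. }
  set (D := fun s => Q s - P s). set (D1 := fun s => Q1 s - P1 s).
  set (g := fun s => 4/9 * D s + sigma * (Q s ^ 7 - P s ^ 7)).
  assert (Hg : forall s, 0 <= s <= 1/2 -> Rabs (g s) <= L * Rabs (D s)).
  { intros s Hs. apply Rabs_nonlinearity_sub_le;
      [specialize (HBQ s Hs) | specialize (HBP s Hs)]; lra. }
  assert (HD : has_deriv_on 0 (1/2) D D1) by (apply has_deriv_on_minus; auto).
  assert (HD1 : has_deriv_on 0 (1/2) D1 (fun s => Q2 s - P2 s))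
    by (apply has_deriv_on_minus; auto).
  set (h := fun s => (2/3 * s ^ 3 * D1 s + s ^ 2 * g s) / (1 - s ^ 2)).
  assert (Hh : has_deriv_on 0 (1/2) (fun s => s ^ 2 * D1 s) h).
  { assert (Hsq : has_deriv_on 0 (1/2) (fun s => s ^ 2) (fun s => 2 * s)).
    { apply has_deriv_on_is_derive. intros x _. auto_derive; auto. ring. }
    eapply has_deriv_on_ext; [apply (has_deriv_on_mult _ _ _ _ _ _ Hsq HD1) | reflexivity |].
    intros s Hs. cbv beta. destruct (Req_dec s 0) as [->|Hs0].
    { unfold h. field_simplify; lra. }
    apply radial_identity; [lra|].
    specialize (HQe s ltac:(lra)). specialize (HPe s ltac:(lra)).
    unfold D1, g, D. lra. }
  intros a Ha.
  assert (HDa : D a = 0).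
  { apply (singular_gronwall (1/2) (4/3 * (2/3 + L)) D D1 h); auto; try lra.
    - eapply has_deriv_on_cont_on; eauto.
    - unfold D. rewrite HQ0, HP0. ring.
    - unfold D1. rewrite HQ10, HP10. ring.
    - intros s Hs. apply Rabs_radial_remainder_le; auto. }
  unfold D in HDa. lra.
Qed.

(** * Majorants for power series coefficients *)

(* The weights [3^j / (j+1)^2] form a Banach algebra under convolution up to the constant 8:
   this is what makes the nonlinear recursion for the coefficients of the solution controllable. *)
Definition weight (j : nat) := / (INR j + 1) ^ 2.

Lemma weight_pos j : 0 < weight j.
Proof. unfold weight. apply Rinv_0_lt_compat. pose proof (pos_INR j). nra. Qed.

Lemma weight_le_1 j : weight j <= 1.
Proof. unfold weight. pose proof (pos_INR j). rewrite <- Rinv_1. apply Rinv_le_contravar; nra. Qed.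

Lemma weight_S j : weight (S j) = / (INR j + 2) ^ 2.
Proof. unfold weight. rewrite S_INR. f_equal. ring. Qed.

Lemma sum_weight_le j : sum_f_R0 weight j <= 2 - / (INR j + 1).
Proof.
  induction j.
  - unfold weight. simpl. lra.
  - rewrite tech5, weight_S, S_INR. pose proof (pos_INR j).
    assert (/ (INR j + 2) ^ 2 <= / (INR j + 1) - / (INR j + 1 + 1)).
    { replace (/ (INR j + 1) - / (INR j + 1 + 1)) with (/ ((INR j + 1) * (INR j + 2)))
        by (field; lra).
      apply Rinv_le_contravar; nra. }
    lra.
Qed.

Lemma weight_mul_le j k : (k <= j)%nat ->
  weight k * weight (j - k) <= 2 * weight j * (weight k + weight (j - k)).
Proof.
  intros Hk. unfold weight. rewrite minus_INR by auto.
  set (p := INR k + 1). set (q := INR j - INR k + 1).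
  assert (Hp : 1 <= p) by (unfold p; pose proof (pos_INR k); lra).
  assert (Hq : 1 <= q) by (unfold q; apply le_INR in Hk; lra).
  replace (INR j + 1) with (p + q - 1) by (unfold p, q; ring).
  replace (2 * / (p + q - 1) ^ 2 * (/ p ^ 2 + / q ^ 2)) with
     ((2 * (p ^ 2 + q ^ 2) / (p + q - 1) ^ 2) * (/ p ^ 2 * / q ^ 2)) by (field; nra).
  rewrite <- (Rmult_1_l (/ p ^ 2 * / q ^ 2)) at 1.
  apply Rmult_le_compat_r; [apply Rmult_le_pos; left; apply Rinv_0_lt_compat; nra|].
  apply Rmult_le_reg_r with ((p + q - 1) ^ 2); [nra|].
  unfold Rdiv. rewrite Rmult_assoc, Rinv_l, Rmult_1_r by nra.
  assert (0 <= (p - q) ^ 2) by apply pow2_ge_0. nra.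
Qed.

Lemma sum_weight_conv_le j : sum_f_R0 (fun k => weight k * weight (j - k)) j <= 8 * weight j.
Proof.
  eapply Rle_trans; [apply sum_Rle; intros k Hk; apply (weight_mul_le j k Hk)|].
  rewrite (sum_eq _ (fun i => (weight i + weight (j - i)%nat) * (2 * weight j))) by (intros; ring).
  rewrite <- scal_sum, sum_plus, (sum_f_R0_skip weight j).
  pose proof (sum_weight_le j). pose proof (weight_pos j).
  assert (0 < / (INR j + 1)) by (apply Rinv_0_lt_compat; pose proof (pos_INR j); lra).
  nra.
Qed.

Definition majorized_upto (n : nat) (a : R) (u : nat -> R) : Prop :=
  forall i, (i <= n)%nat -> Rabs (u i) <= a * 3 ^ i * weight i.

Lemma majorized_upto_nonneg n a u : majorized_upto n a u -> 0 <= a.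
Proof.
  intros H. specialize (H O (Nat.le_0_l n)). unfold weight in H. simpl in H.
  pose proof (Rabs_pos (u O)). lra.
Qed.

Lemma PS_mult_majorized n a b u v : majorized_upto n a u -> majorized_upto n b v ->
  majorized_upto n (8 * a * b) (PS_mult u v).
Proof.
  intros Hu Hv j Hj. pose proof (majorized_upto_nonneg n a u Hu).
  pose proof (majorized_upto_nonneg n b v Hv). unfold PS_mult.
  eapply Rle_trans; [apply sum_f_R0_triangle|].
  eapply Rle_trans;
    [apply sum_Rle with (Bn := fun k => (weight k * weight (j - k)%nat) * (a * b * 3 ^ j))|].
  - intros k Hk. rewrite Rabs_mult.
    replace ((weight k * weight (j - k)%nat) * (a * b * 3 ^ j)) with
      ((a * 3 ^ k * weight k) * (b * 3 ^ (j - k) * weight (j - k)%nat)).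
    + apply Rmult_le_compat; try apply Rabs_pos; [apply Hu | apply Hv]; lia.
    + replace (3 ^ j) with (3 ^ k * 3 ^ (j - k)) by (rewrite <- pow_add; f_equal; lia). ring.
  - rewrite <- scal_sum. pose proof (sum_weight_conv_le j).
    assert (0 <= a * b * 3 ^ j) by (apply Rmult_le_pos; [nra| apply pow_le; lra]). nra.
Qed.

(* [PS_pow u k] is the coefficient sequence of the (k+1)-st power of the series of [u]. *)
Fixpoint PS_pow (u : nat -> R) (k : nat) : nat -> R :=
  match k with O => u | S k => PS_mult u (PS_pow u k) end.

Lemma PS_pow_majorized n a u k : majorized_upto n a u ->
  majorized_upto n (8 ^ k * a ^ S k) (PS_pow u k).
Proof.
  intros Hu. induction k; simpl PS_pow.
  - intros i Hi. simpl. rewrite Rmult_1_l, Rmult_1_r. auto.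
  - eapply (PS_mult_majorized _ _ _ _ _ Hu) in IHk. intros i Hi.
    eapply Rle_trans; [apply IHk; auto|]. right. simpl. ring.
Qed.

Lemma PS_pow_ext_upto n u u' k : (forall i, (i <= n)%nat -> u i = u' i) ->
  forall j, (j <= n)%nat -> PS_pow u k j = PS_pow u' k j.
Proof.
  intros Hu. induction k; simpl; auto. intros j Hj. unfold PS_mult. apply sum_eq.
  intros i Hi. rewrite Hu, IHk by lia. auto.
Qed.

Lemma CV_radius_gt u C K x : 0 < K -> (forall n, Rabs (u n) <= C * K ^ n) -> Rabs x < / K ->
  Rbar_lt (Rabs x) (CV_radius u).
Proof.
  intros HK Hu Hx. eapply Rbar_lt_le_trans; [|apply (proj1 (CV_radius_bounded u))]; [exact Hx|].
  exists C. intros n. rewrite Rabs_mult, <- RPow_abs, (Rabs_right (/ K))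
    by (left; apply Rinv_0_lt_compat; auto).
  apply Rle_trans with (C * K ^ n * (/ K) ^ n).
  - apply Rmult_le_compat_r; [apply pow_le; left; apply Rinv_0_lt_compat; auto| auto].
  - rewrite Rmult_assoc, <- Rpow_mult_distr, Rinv_r, pow1 by lra. lra.
Qed.

Lemma majorized_CV_radius a u x : (forall n, majorized_upto n a u) -> Rabs x < 1/3 ->
  Rbar_lt (Rabs x) (CV_radius u).
Proof.
  intros Hu Hx. pose proof (majorized_upto_nonneg O a u (Hu O)).
  apply (CV_radius_gt u a 3); [lra| |lra].
  intros n. eapply Rle_trans; [apply (Hu n n); auto|].
  pose proof (weight_le_1 n). pose proof (weight_pos n).
  assert (0 <= a * 3 ^ n) by (apply Rmult_le_pos; [lra|apply pow_le; lra]). nra.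
Qed.

Lemma PSeries_PS_pow a u k x : (forall n, majorized_upto n a u) -> Rabs x < 1/3 ->
  PSeries (PS_pow u k) x = PSeries u x ^ S k.
Proof.
  intros Hu Hx. induction k; simpl PS_pow; [simpl; ring|].
  rewrite PSeries_mult, IHk; [simpl; ring| |].
  - apply (majorized_CV_radius a); auto.
  - apply (majorized_CV_radius (8 ^ k * a ^ S k)); auto.
    intros n. apply PS_pow_majorized, Hu.
Qed.

(** * The coefficients of the solution *)

(* With x = a^2 and Q(a) = P(x), the equation becomes
   4x(x-1) P'' + (22/3 x - 6) P' + 4/9 P + sigma P^7 = 0, whose coefficients satisfy
   den_coef k * b_(k+1) = num_coef k * b_k + sigma * (b^7)_k. *)
Definition num_coef (k : nat) := (2 * INR k + 1/3) * (2 * INR k + 4/3).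
Definition den_coef (k : nat) := (2 * INR k + 2) * (2 * INR k + 3).

Lemma num_coef_nonneg k : 0 <= num_coef k.
Proof. unfold num_coef. pose proof (pos_INR k). nra. Qed.

Lemma den_coef_pos k : 0 < den_coef k.
Proof. unfold den_coef. pose proof (pos_INR k). nra. Qed.

Lemma num_coef_le_den_coef k : num_coef k <= den_coef k.
Proof. unfold num_coef, den_coef. pose proof (pos_INR k). nra. Qed.

Lemma num_den_weight_le k : (num_coef k + 1) / den_coef k * weight k <= 3 * weight (S k).
Proof.
  rewrite weight_S. unfold weight, num_coef, den_coef. pose proof (pos_INR k) as H.
  set (J := INR k) in *.
  set (P := (2 * J + 2) * (2 * J + 3) * (J + 1) ^ 2 * (J + 2) ^ 2).
  assert (HP : 0 < P) by (unfold P; repeat apply Rmult_lt_0_compat; nra).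
  apply Rmult_le_reg_r with P; auto.
  replace (((2 * J + 1 / 3) * (2 * J + 4 / 3) + 1) / ((2 * J + 2) * (2 * J + 3))
           * / (J + 1) ^ 2 * P)
    with ((4 * J ^ 2 + 10/3 * J + 13/9) * (J + 2) ^ 2) by (unfold P; field; nra).
  replace (3 * / (J + 2) ^ 2 * P) with (3 * ((2 * J + 2) * (2 * J + 3) * (J + 1) ^ 2))
    by (unfold P; field; nra).
  assert (0 <= J ^ 3) by (apply pow_le; lra). nra.
Qed.

Lemma majorized_next_coef n a u b e : 0 <= e <= a -> majorized_upto n a u ->
  Rabs (den_coef n * b - num_coef n * u n) <= e * 3 ^ n * weight n ->
  Rabs b <= a * 3 ^ S n * weight (S n).
Proof.
  intros He Hu Hb. specialize (Hu n (le_n n)).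
  pose proof (den_coef_pos n). pose proof (num_coef_nonneg n). pose proof (weight_pos n).
  assert (0 <= 3 ^ n) by (apply pow_le; lra).
  assert (Hden : den_coef n * Rabs b <= (num_coef n + 1) * (a * 3 ^ n * weight n)).
  { rewrite <- (Rabs_right (den_coef n)) by lra. rewrite <- Rabs_mult.
    replace (den_coef n * b) with ((den_coef n * b - num_coef n * u n) + num_coef n * u n)
      by ring.
    eapply Rle_trans; [apply Rabs_triang|]. rewrite Rabs_mult, (Rabs_right (num_coef n)) by lra.
    assert (e * 3 ^ n * weight n <= a * 3 ^ n * weight n)
      by (repeat apply Rmult_le_compat_r; lra).
    assert (num_coef n * Rabs (u n) <= num_coef n * (a * 3 ^ n * weight n))
      by (apply Rmult_le_compat_l; auto).
    lra. }
  pose proof (num_den_weight_le n).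
  apply Rle_trans with ((num_coef n + 1) / den_coef n * weight n * (a * 3 ^ n)).
  - apply Rmult_le_reg_l with (den_coef n); auto.
    replace (den_coef n * ((num_coef n + 1) / den_coef n * weight n * (a * 3 ^ n)))
      with ((num_coef n + 1) * (a * 3 ^ n * weight n)) by (field; lra). auto.
  - assert (0 <= a * 3 ^ n) by (apply Rmult_le_pos; lra). simpl pow. nra.
Qed.

Fixpoint lin_coef (j : nat) : R :=
  match j with O => 1 | S k => num_coef k / den_coef k * lin_coef k end.

Lemma lin_coef_bounds j : 0 <= lin_coef j <= 1.
Proof.
  induction j; simpl; [lra|].
  pose proof (den_coef_pos j). pose proof (num_coef_nonneg j). pose proof (num_coef_le_den_coef j).
  assert (0 <= num_coef j / den_coef j <= 1).
  { split; [apply Rdiv_le_0_compat; lra|].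
    apply Rmult_le_reg_r with (den_coef j); auto.
    unfold Rdiv. rewrite Rmult_assoc, Rinv_l by lra. lra. }
  nra.
Qed.

Section Solution_coefficients.

Variables sigma q0 : R.

Definition next_coef (u : nat -> R) (k : nat) :=
  (num_coef k * u k + sigma * PS_pow u 6 k) / den_coef k.

(* Strong recursion: [coefs_upto n] agrees with the coefficients of the solution on the indices
   [0..n] and is junk beyond. *)
Fixpoint coefs_upto (n : nat) : nat -> R :=
  match n with
  | O => fun i => if (i =? 0)%nat then q0 else 0
  | S m => fun i => if (i <=? m)%nat then coefs_upto m i else next_coef (coefs_upto m) m
  end.

Definition sol_coef (j : nat) := coefs_upto j j.

Lemma coefs_upto_sol_coef n i : (i <= n)%nat -> coefs_upto n i = sol_coef i.
Proof.
  induction n; intros Hi.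
  - assert (i = 0)%nat by lia. subst. reflexivity.
  - destruct (Nat.eq_dec i (S n)) as [->|Hne]; [reflexivity|].
    simpl. replace (i <=? n)%nat with true by (symmetry; apply Nat.leb_le; lia). apply IHn. lia.
Qed.

Lemma sol_coef_0 : sol_coef 0 = q0.
Proof. reflexivity. Qed.

Lemma sol_coef_rec k :
  den_coef k * sol_coef (S k) = num_coef k * sol_coef k + sigma * PS_pow sol_coef 6 k.
Proof.
  unfold sol_coef at 1.
  change (coefs_upto (S k) (S k)) with
    (if (S k <=? k)%nat then coefs_upto k (S k) else next_coef (coefs_upto k) k).
  rewrite (proj2 (Nat.leb_gt (S k) k)) by lia.
  unfold next_coef. rewrite (coefs_upto_sol_coef k k) by lia.
  rewrite (PS_pow_ext_upto k (coefs_upto k) sol_coef 6 (fun i Hi => coefs_upto_sol_coef k i Hi))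
    by lia.
  pose proof (den_coef_pos k). field. lra.
Qed.

Hypotheses (Hsigma : Rabs sigma <= 1) (Hq0 : 0 <= q0 <= 1/8).

Lemma nonlinear_term_majorized n a : majorized_upto n a sol_coef ->
  majorized_upto n (8 ^ 6 * a ^ 7) (fun k => sigma * PS_pow sol_coef 6 k).
Proof.
  intros Ha i Hi. rewrite Rabs_mult. pose proof (PS_pow_majorized n a sol_coef 6 Ha i Hi).
  pose proof (Rabs_pos (PS_pow sol_coef 6 i)). nra.
Qed.

Lemma sol_coef_majorized n : majorized_upto n q0 sol_coef.
Proof.
  induction n.
  - intros i Hi. assert (i = 0)%nat by lia. subst. rewrite sol_coef_0.
    unfold weight. simpl. rewrite Rabs_right; lra.
  - intros i Hi. destruct (Nat.eq_dec i (S n)) as [->|Hne]; [|apply IHn; lia].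
    apply (majorized_next_coef n q0 sol_coef _ (8 ^ 6 * q0 ^ 7)); auto.
    + split; [apply Rmult_le_pos; [lra|apply pow_le; lra]|].
      replace (8 ^ 6 * q0 ^ 7) with (q0 * (8 * q0) ^ 6) by ring.
      assert ((8 * q0) ^ 6 <= 1) by (rewrite <- (pow1 6); apply pow_incr; lra).
      assert (0 <= (8 * q0) ^ 6) by (apply pow_le; lra). nra.
    + rewrite sol_coef_rec. replace (num_coef n * sol_coef n + sigma * PS_pow sol_coef 6 n
        - num_coef n * sol_coef n) with (sigma * PS_pow sol_coef 6 n) by ring.
      apply (nonlinear_term_majorized n q0 IHn n (le_n n)).
Qed.

Lemma sol_coef_sub_lin_majorized n :
  majorized_upto n (8 ^ 6 * q0 ^ 7) (fun j => sol_coef j - q0 * lin_coef j).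
Proof.
  induction n.
  - intros i Hi. assert (i = 0)%nat by lia. subst. rewrite sol_coef_0.
    simpl lin_coef. rewrite Rmult_1_r, Rminus_eq_0, Rabs_R0. pose proof (weight_pos 0).
    assert (0 <= 8 ^ 6 * q0 ^ 7) by (apply Rmult_le_pos; [lra|apply pow_le; lra]).
    simpl pow. nra.
  - intros i Hi. destruct (Nat.eq_dec i (S n)) as [->|Hne]; [|apply IHn; lia].
    assert (0 <= 8 ^ 6 * q0 ^ 7) by (apply Rmult_le_pos; [lra|apply pow_le; lra]).
    apply (majorized_next_coef n (8 ^ 6 * q0 ^ 7) _ _ (8 ^ 6 * q0 ^ 7) ltac:(lra) IHn).
    pose proof (den_coef_pos n). simpl lin_coef.
    replace (den_coef n * (sol_coef (S n) - q0 * (num_coef n / den_coef n * lin_coef n))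
      - num_coef n * (sol_coef n - q0 * lin_coef n))
      with (den_coef n * sol_coef (S n) - num_coef n * sol_coef n) by (field; lra).
    rewrite sol_coef_rec.
    replace (num_coef n * sol_coef n + sigma * PS_pow sol_coef 6 n - num_coef n * sol_coef n)
      with (sigma * PS_pow sol_coef 6 n) by ring.
    apply (nonlinear_term_majorized n q0 (sol_coef_majorized n) n (le_n n)).
Qed.

End Solution_coefficients.

Lemma PSeries_scal_plus c u v x : ex_pseries u x -> ex_pseries v x ->
  PSeries (fun n => c * u n + v n) x = c * PSeries u x + PSeries v x.
Proof.
  intros Hu Hv. rewrite (PSeries_ext _ (PS_plus (PS_scal c u) v)) by reflexivity.
  rewrite PSeries_plus, PSeries_scal; auto.
  apply ex_pseries_scal; auto. unfold mult; simpl. apply Rmult_comm.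
Qed.

Lemma ex_pseries_scal_plus c u v x : ex_pseries u x -> ex_pseries v x ->
  ex_pseries (fun n => c * u n + v n) x.
Proof.
  intros Hu Hv. apply (ex_pseries_ext (PS_plus (PS_scal c u) v)); [reflexivity|].
  apply ex_pseries_plus; auto. apply ex_pseries_scal; auto. unfold mult; simpl. apply Rmult_comm.
Qed.

Lemma ex_pseries_0 x : ex_pseries (fun _ => 0) x.
Proof. apply CV_radius_inside. rewrite CV_radius_const_0. simpl; auto. Qed.

Lemma is_derive_PSeries_sq c y : Rbar_lt (Rabs (y ^ 2)) (CV_radius c) ->
  is_derive (fun z => PSeries c (z ^ 2)) y (2 * y * PSeries (PS_derive c) (y ^ 2)).
Proof.
  intros Hc. evar (d : R). replace (2 * y * PSeries (PS_derive c) (y ^ 2)) with d.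
  - apply (is_derive_comp (PSeries c) (fun z => z ^ 2)); [apply is_derive_PSeries, Hc|].
    auto_derive; auto.
  - unfold d, scal; simpl. unfold mult; simpl. ring.
Qed.

Ltac solve_ex_pseries :=
  repeat lazymatch goal with
  | |- ex_pseries (fun _ => 0) _ => apply ex_pseries_0
  | |- ex_pseries (PS_incr_1 _) _ => apply ex_pseries_incr_1
  | |- ex_pseries (fun n => @?f n + @?g n) _ => apply ex_pseries_scal_plus
  | |- _ => assumption
  end.

Section Radial_equation.

Variables (sigma : R) (b : nat -> R).
Hypothesis Hrec :
  forall k, den_coef k * b (S k) = num_coef k * b k + sigma * PS_pow b 6 k.

Lemma radial_ode_coef n :
  4 * PS_incr_1 (PS_incr_1 (PS_derive (PS_derive b))) n +
  (-4 * PS_incr_1 (PS_derive (PS_derive b)) n +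
  (22/3 * PS_incr_1 (PS_derive b) n +
  (-6 * PS_derive b n + (4/9 * b n + (sigma * PS_pow b 6 n + 0))))) = 0.
Proof.
  destruct n as [|[|k]]; unfold PS_incr_1, PS_derive.
  - pose proof (Hrec 0). unfold num_coef, den_coef in H. simpl in *.
    change (zero : R) with 0. nra.
  - pose proof (Hrec 1). unfold num_coef, den_coef in H.
    change (zero : R) with 0. simpl INR in *. nra.
  - pose proof (Hrec (S (S k))). unfold num_coef, den_coef in H. rewrite !S_INR in *. nra.
Qed.

Lemma radial_ode x : Rbar_lt (Rabs x) (CV_radius b) -> ex_pseries (PS_pow b 6) x ->
  4 * x * (x - 1) * PSeries (PS_derive (PS_derive b)) x + (22/3 * x - 6) * PSeries (PS_derive b) x
  + 4/9 * PSeries b x + sigma * PSeries (PS_pow b 6) x = 0.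
Proof.
  intros R0 E7.
  assert (E0 := CV_radius_inside _ _ R0).
  assert (E1 : ex_pseries (PS_derive b) x)
    by (apply CV_radius_inside; rewrite CV_radius_derive; auto).
  assert (E2 : ex_pseries (PS_derive (PS_derive b)) x)
    by (apply CV_radius_inside; rewrite !CV_radius_derive; auto).
  assert (Z := PSeries_ext _ _ x radial_ode_coef). rewrite PSeries_const_0 in Z.
  do 6 (rewrite PSeries_scal_plus in Z; [|solve_ex_pseries|solve_ex_pseries]).
  rewrite !PSeries_incr_1, PSeries_const_0 in Z. rewrite <- Z. ring.
Qed.

End Radial_equation.

Section Series_solution.

Variables sigma q0 : R.
Hypotheses (Hsigma : Rabs sigma <= 1) (Hq0 : 0 <= q0 <= 1/8).

Let b := sol_coef sigma q0.

Lemma sol_coef_CV_radius x : Rabs x < 1/3 -> Rbar_lt (Rabs x) (CV_radius b).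
Proof. apply (majorized_CV_radius q0). apply sol_coef_majorized; auto. Qed.

Lemma sol_series_ode x : Rabs x < 1/3 ->
  4 * x * (x - 1) * PSeries (PS_derive (PS_derive b)) x + (22/3 * x - 6) * PSeries (PS_derive b) x
  + 4/9 * PSeries b x + sigma * (PSeries b x) ^ 7 = 0.
Proof.
  intros Hx. rewrite <- (PSeries_PS_pow q0 b 6 x) by (auto; intros n; apply sol_coef_majorized; auto).
  apply radial_ode; [apply sol_coef_rec | apply sol_coef_CV_radius; auto |].
  apply CV_radius_inside, (majorized_CV_radius (8 ^ 6 * q0 ^ 7)); auto.
  intros n. apply PS_pow_majorized, sol_coef_majorized; auto.
Qed.

End Series_solution.

Lemma is_derive_eq_on_ball (f g : R -> R) (y r l l' : R) :
  Rabs y < r -> (forall z, Rabs z < r -> f z = g z) ->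
  is_derive f y l -> is_derive g y l' -> l = l'.
Proof.
  intros Hy Hfg Hf Hg. apply is_derive_unique in Hg. rewrite <- Hg. symmetry.
  apply is_derive_unique. apply (is_derive_ext_loc f); auto.
  assert (Hp : 0 < r - Rabs y) by lra. exists (mkposreal _ Hp). intros z Hz.
  change (Rabs (z - y) < r - Rabs y) in Hz. apply Hfg.
  replace z with ((z - y) + y) by ring. eapply Rle_lt_trans; [apply Rabs_triang|]. lra.
Qed.

Section Even_solution.

Variables sigma q0 : R.
Hypotheses (Hsigma : Rabs sigma <= 1) (Hq0 : 0 <= q0 <= 1/8).

Let b := sol_coef sigma q0.

Definition even_coef (n : nat) := if Nat.even n then b (Nat.div2 n) else 0.
Definition sol (a : R) := PSeries even_coef a.
Definition sol_derive (n : nat) (a : R) := PSeries (Nat.iter n PS_derive even_coef) a.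

Lemma even_coef_double n : even_coef (2 * n) = b n.
Proof.
  unfold even_coef. rewrite Nat.div2_double.
  replace (Nat.even (2 * n)) with true by (symmetry; apply Nat.even_spec; exists n; auto). auto.
Qed.

Lemma even_coef_double_succ n : even_coef (2 * n + 1) = 0.
Proof. unfold even_coef. rewrite Nat.even_odd. auto. Qed.

(* 3 < (7/4)^2, so the radius 1/3 in x = a^2 becomes the radius 4/7 > 1/2 in a. *)
Lemma even_coef_bound n : Rabs (even_coef n) <= q0 * (7/4) ^ n.
Proof.
  destruct (Nat.Even_or_Odd n) as [[m ->]|[m ->]].
  - rewrite even_coef_double, pow_mult.
    pose proof (sol_coef_majorized sigma q0 Hsigma Hq0 m m (le_n m)).
    pose proof (weight_le_1 m). pose proof (weight_pos m).
    assert (3 ^ m <= ((7/4) ^ 2) ^ m) by (apply pow_incr; simpl; lra).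
    assert (0 <= 3 ^ m) by (apply pow_le; lra).
    assert (0 <= q0 * 3 ^ m) by nra.
    assert (q0 * 3 ^ m * weight m <= q0 * 3 ^ m) by nra.
    apply Rle_trans with (q0 * 3 ^ m); [fold b in H; lra|]. apply Rmult_le_compat_l; lra.
  - rewrite even_coef_double_succ, Rabs_R0. apply Rmult_le_pos; [lra|apply pow_le; lra].
Qed.

Lemma is_derive_sol_derive n a : Rabs a < 4/7 -> is_derive (sol_derive n) a (sol_derive (S n) a).
Proof.
  intros Ha. unfold sol_derive. simpl. apply is_derive_PSeries.
  assert (Hrad : forall m c, CV_radius (Nat.iter m PS_derive c) = CV_radius c).
  { induction m; intros c; simpl; auto. rewrite CV_radius_derive. auto. }
  rewrite Hrad. apply (CV_radius_gt _ q0 (7/4)); [lra|apply even_coef_bound|].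
  replace (/ (7/4)) with (4/7) by field. auto.
Qed.

Lemma sol_smooth lo hi : -(1/2) <= lo -> hi <= 1/2 -> smooth_on lo hi sol.
Proof.
  intros Hl Hh. exists sol_derive. split; [intros; reflexivity|].
  intros n. apply has_deriv_on_is_derive. intros x Hx. apply is_derive_sol_derive.
  apply Rabs_def1; lra.
Qed.

Lemma sq_lt_third a : Rabs a < 4/7 -> Rabs (a ^ 2) < 1/3.
Proof. intros H. rewrite <- RPow_abs. pose proof (Rabs_pos a). nra. Qed.

Lemma sol_eq_PSeries_sq a : Rabs a < 4/7 -> sol a = PSeries b (a ^ 2).
Proof.
  intros Ha. unfold sol.
  assert (R := sol_coef_CV_radius sigma q0 Hsigma Hq0 (a ^ 2) (sq_lt_third a Ha)).
  rewrite PSeries_odd_even.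
  - rewrite (PSeries_ext _ b) by (intros; apply even_coef_double).
    rewrite (PSeries_ext (fun n => even_coef (2 * n + 1)) (fun _ => 0))
      by (intros; apply even_coef_double_succ).
    rewrite PSeries_const_0. ring.
  - apply (ex_pseries_ext b); [intros; rewrite even_coef_double; auto|].
    apply CV_radius_inside; auto.
  - apply (ex_pseries_ext (fun _ => 0)); [intros; rewrite even_coef_double_succ; auto|].
    apply ex_pseries_0.
Qed.

Lemma sol_even a : Rabs a < 4/7 -> sol (- a) = sol a.
Proof.
  intros Ha. rewrite !sol_eq_PSeries_sq; auto; [|rewrite Rabs_Ropp; auto]. f_equal. ring.
Qed.

Lemma sol_derive_1 y : Rabs y < 4/7 -> sol_derive 1 y = 2 * y * PSeries (PS_derive b) (y ^ 2).
Proof.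
  intros Hy. apply (is_derive_eq_on_ball (sol_derive 0) (fun z => PSeries b (z ^ 2)) y (4/7));
    auto using sol_eq_PSeries_sq, is_derive_sol_derive.
  apply is_derive_PSeries_sq, sol_coef_CV_radius; auto. apply sq_lt_third; auto.
Qed.

Lemma sol_derive_2 y : Rabs y < 4/7 ->
  sol_derive 2 y = 2 * PSeries (PS_derive b) (y ^ 2)
                   + 4 * y ^ 2 * PSeries (PS_derive (PS_derive b)) (y ^ 2).
Proof.
  intros Hy.
  apply (is_derive_eq_on_ball (sol_derive 1)
    (fun z => 2 * z * PSeries (PS_derive b) (z ^ 2)) y (4/7));
    auto using sol_derive_1, is_derive_sol_derive.
  assert (R1 : Rbar_lt (Rabs (y ^ 2)) (CV_radius (PS_derive b))).
  { rewrite CV_radius_derive. apply sol_coef_CV_radius; auto. apply sq_lt_third; auto. }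
  evar (d : R). replace (2 * PSeries (PS_derive b) (y ^ 2)
                         + 4 * y ^ 2 * PSeries (PS_derive (PS_derive b)) (y ^ 2)) with d.
  - apply (is_derive_mult (fun z => 2 * z) (fun z => PSeries (PS_derive b) (z ^ 2)) y 2).
    + auto_derive; auto. ring.
    + apply is_derive_PSeries_sq, R1.
    + intros; unfold mult; simpl; ring.
  - unfold d, plus, mult; simpl. ring.
Qed.

Lemma sol_is_solution : is_solution sigma q0 sol.
Proof.
  assert (Hin : forall x, 0 <= x <= 1/2 -> Rabs x < 4/7) by (intros; apply Rabs_def1; lra).
  split; [apply sol_smooth; lra|].
  exists (sol_derive 1), (sol_derive 2). split; [|split; [|split; [|split]]].
  - apply has_deriv_on_is_derive. intros x Hx. apply (is_derive_sol_derive 0); auto.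
  - apply has_deriv_on_is_derive. intros x Hx. apply (is_derive_sol_derive 1); auto.
  - unfold sol. rewrite PSeries_0. reflexivity.
  - unfold sol_derive. simpl. rewrite PSeries_0. unfold PS_derive, even_coef. simpl. ring.
  - intros a Ha. rewrite sol_derive_1, sol_derive_2, sol_eq_PSeries_sq by (apply Hin; lra).
    pose proof (sol_series_ode sigma q0 Hsigma Hq0 (a ^ 2)
      (sq_lt_third a (Hin a ltac:(lra)))) as E.
    fold b in E. rewrite <- E. field. lra.
Qed.

End Even_solution.

(** * The linearized solution [Q0] *)

Fixpoint binom23 (n : nat) : R :=
  match n with O => 1 | S k => binom23 k * (2/3 - INR k) / (INR k + 1) end.

Lemma binom23_S k : binom23 (S k) = binom23 k * (2/3 - INR k) / (INR k + 1).
Proof. reflexivity. Qed.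

Lemma binom23_bound n : Rabs (binom23 n) <= 1.
Proof.
  induction n; simpl binom23; [rewrite Rabs_R1; lra|].
  pose proof (pos_INR n). unfold Rdiv. rewrite !Rabs_mult.
  rewrite (Rabs_right (/ (INR n + 1))) by (left; apply Rinv_0_lt_compat; lra).
  assert (Rabs (2/3 - INR n) * / (INR n + 1) <= 1).
  { apply Rmult_le_reg_r with (INR n + 1); [lra|]. rewrite Rmult_assoc, Rinv_l by lra.
    unfold Rabs; destruct Rcase_abs; lra. }
  assert (0 <= Rabs (2/3 - INR n) * / (INR n + 1))
    by (apply Rmult_le_pos; [apply Rabs_pos| left; apply Rinv_0_lt_compat; lra]).
  pose proof (Rabs_pos (binom23 n)). nra.
Qed.

Lemma bounded_CV_radius u x : (forall n, Rabs (u n) <= 1) -> Rabs x < 1 ->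
  Rbar_lt (Rabs x) (CV_radius u).
Proof.
  intros Hu Hx. apply (CV_radius_gt _ 1 1); [lra| |rewrite Rinv_1; auto].
  intros n. rewrite pow1, Rmult_1_l. auto.
Qed.

Lemma binom23_ode x : Rabs x < 1 ->
  (1 + x) * PSeries (PS_derive binom23) x = 2/3 * PSeries binom23 x.
Proof.
  intros Hx.
  assert (R0 := bounded_CV_radius binom23 x binom23_bound Hx).
  assert (E0 := CV_radius_inside _ _ R0).
  assert (E1 : ex_pseries (PS_derive binom23) x)
    by (apply CV_radius_inside; rewrite CV_radius_derive; auto).
  assert (Zc : forall n, 1 * PS_derive binom23 n
    + (1 * PS_incr_1 (PS_derive binom23) n + (-2/3 * binom23 n + 0)) = 0).
  { intros [|k].
    - unfold PS_derive. simpl. change (zero : R) with 0. field.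
    - unfold PS_incr_1, PS_derive.
      rewrite (binom23_S (S k)), !S_INR. pose proof (pos_INR k). field. lra. }
  assert (Z := PSeries_ext _ _ x Zc). rewrite PSeries_const_0 in Z.
  do 3 (rewrite PSeries_scal_plus in Z; [|solve_ex_pseries|solve_ex_pseries]).
  rewrite PSeries_incr_1, PSeries_const_0 in Z. lra.
Qed.

Lemma is_derive_zero_const (f : R -> R) r x : (forall t, Rabs t < r -> is_derive f t 0) ->
  Rabs x < r -> f x = f 0.
Proof.
  intros Hf Hx.
  assert (Hseg : forall y, Rmin 0 x <= y <= Rmax 0 x -> Rabs y < r).
  { intros y Hy. apply Rabs_def2 in Hx. unfold Rmin, Rmax in Hy.
    destruct Rle_dec in Hy; apply Rabs_def1; lra. }
  destruct (MVT_gen f 0 x (fun _ => 0)) as [c [Hc Heq]].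
  - intros y Hy. apply Hf, Hseg. lra.
  - intros y Hy. apply continuity_pt_filterlim, (ex_derive_continuous f).
    eexists. apply Hf, Hseg, Hy.
  - lra.
Qed.

(* The binomial ODE says exactly that S(t) (1+t)^(-2/3) is constant. *)
Lemma is_derive_binom23_ratio t : Rabs t < 1 ->
  is_derive (fun t => PSeries binom23 t * Rpower (1 + t) (-2/3)) t 0.
Proof.
  intros Ht. assert (Hpos : 0 < 1 + t) by (apply Rabs_def2 in Ht; lra).
  assert (D1 : is_derive (PSeries binom23) t (PSeries (PS_derive binom23) t))
    by (apply is_derive_PSeries, bounded_CV_radius; auto using binom23_bound).
  assert (D2 : is_derive (fun u => Rpower (1 + u) (-2/3)) t (-2/3 * Rpower (1 + t) (-2/3 - 1))).
  { evar (d : R). replace (-2/3 * Rpower (1 + t) (-2/3 - 1)) with d.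
    - apply (is_derive_comp (fun v => Rpower v (-2/3)) (fun u => 1 + u)).
      + apply is_derive_Reals, derivable_pt_lim_power. auto.
      + auto_derive; auto.
    - unfold d, scal; simpl. unfold mult; simpl. ring. }
  replace 0 with (PSeries (PS_derive binom23) t * Rpower (1 + t) (-2/3)
                  + PSeries binom23 t * (-2/3 * Rpower (1 + t) (-2/3 - 1))).
  - apply (is_derive_mult _ _ t _ _ D1 D2). intros; unfold mult; simpl; ring.
  - assert (E : Rpower (1 + t) (-2/3) = Rpower (1 + t) (-2/3 - 1) * (1 + t)).
    { rewrite <- (Rpower_1 (1 + t)) at 3 by auto. rewrite <- Rpower_plus. f_equal. ring. }
    rewrite E. pose proof (binom23_ode t Ht). nra.
Qed.

Lemma PSeries_binom23 x : Rabs x < 1 -> PSeries binom23 x = Rpower (1 + x) (2/3).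
Proof.
  intros Hx. assert (Hpos : 0 < 1 + x) by (apply Rabs_def2 in Hx; lra).
  assert (Hc := is_derive_zero_const _ 1 x is_derive_binom23_ratio Hx). cbv beta in Hc.
  rewrite PSeries_0, Rplus_0_r in Hc. unfold Rpower at 2 in Hc.
  rewrite ln_1, Rmult_0_r, exp_0, Rmult_1_r in Hc. simpl binom23 in Hc.
  replace (PSeries binom23 x)
    with (PSeries binom23 x * Rpower (1 + x) (-2/3) * Rpower (1 + x) (2/3)).
  - rewrite Hc. ring.
  - rewrite Rmult_assoc, <- Rpower_plus. replace (-2/3 + 2/3) with 0 by lra.
    rewrite Rpower_O by auto. ring.
Qed.

Lemma lin_coef_binom23 j : lin_coef j = 3/2 * binom23 (2 * j + 1).
Proof.
  induction j; [simpl; field|].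
  simpl lin_coef. rewrite IHj.
  replace (2 * S j + 1)%nat with (S (S (2 * j + 1))) by lia.
  rewrite (binom23_S (S (2 * j + 1))), (binom23_S (2 * j + 1)). unfold num_coef, den_coef. rewrite !S_INR, plus_INR, mult_INR. simpl INR.
  pose proof (pos_INR j). field. lra.
Qed.

(* phi2 - phi1 = ((1+a)^(2/3) - (1-a)^(2/3)) / a keeps only the odd binomial coefficients. *)
Lemma Q0_eq_PSeries_sq a : 0 < a < 1 -> Q0 a = PSeries lin_coef (a ^ 2).
Proof.
  intros Ha. unfold Q0, phi1, phi2.
  assert (Ha1 : Rabs a < 1) by (apply Rabs_def1; lra).
  assert (Ha2 : Rabs (- a) < 1) by (rewrite Rabs_Ropp; auto).
  assert (Hsq : Rabs (a ^ 2) < 1) by (apply Rabs_def1; nra).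
  assert (Hsub : forall k, ex_pseries (fun n => binom23 (2 * n + k)) (a ^ 2)).
  { intros k. apply CV_radius_inside, bounded_CV_radius; auto. intros n. apply binom23_bound. }
  assert (Eo := Hsub 1%nat).
  assert (Ee : ex_pseries (fun n => binom23 (2 * n)) (a ^ 2)).
  { apply (ex_pseries_ext _ _ _ (fun n => f_equal binom23 (Nat.add_0_r (2 * n))) (Hsub 0%nat)). }
  rewrite <- (PSeries_binom23 a Ha1). replace (1 - a) with (1 + - a) by ring.
  rewrite <- (PSeries_binom23 (- a) Ha2).
  rewrite (PSeries_odd_even binom23 a), (PSeries_odd_even binom23 (- a))
    by (try replace ((- a) ^ 2) with (a ^ 2) by ring; auto).
  replace ((- a) ^ 2) with (a ^ 2) by ring.
  rewrite (PSeries_ext lin_coef (PS_scal (3/2) (fun n => binom23 (2 * n + 1))))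
    by (intros; rewrite lin_coef_binom23; reflexivity).
  rewrite PSeries_scal. field. lra.
Qed.

Lemma lin_coef_CV_radius x : Rabs x < 1 -> Rbar_lt (Rabs x) (CV_radius lin_coef).
Proof.
  intros Hx. apply bounded_CV_radius; auto.
  intros n. pose proof (lin_coef_bounds n). rewrite Rabs_right; lra.
Qed.

Lemma Derive_Q0_half : Derive Q0 (1/2) = PSeries (PS_derive lin_coef) (1/4).
Proof.
  apply is_derive_unique.
  apply (is_derive_ext_loc (fun z => PSeries lin_coef (z ^ 2))).
  - assert (Hp : 0 < 1/4) by lra. exists (mkposreal _ Hp). intros z Hz.
    change (Rabs (z - 1/2) < 1/4) in Hz. apply Rabs_def2 in Hz.
    symmetry. apply Q0_eq_PSeries_sq. lra.
  - assert (D := is_derive_PSeries_sq lin_coef (1/2)).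
    replace ((1/2) ^ 2) with (1/4) in D by field.
    replace (2 * (1/2) * PSeries (PS_derive lin_coef) (1/4))
      with (PSeries (PS_derive lin_coef) (1/4)) in D by field.
    apply D, lin_coef_CV_radius. apply Rabs_def1; lra.
Qed.

(** * Estimates at [a = 1/2] *)

Lemma Rabs_Series_le_geom u C q : 0 <= q < 1 -> (forall n, Rabs (u n) <= C * q ^ n) ->
  Rabs (Series u) <= C / (1 - q).
Proof.
  intros Hq Hu.
  assert (Hg : ex_series (fun n => C * q ^ n)).
  { apply (ex_series_scal_l C (fun n => q ^ n)). apply ex_series_geom. rewrite Rabs_right; lra. }
  assert (Ha : ex_series (fun n => Rabs (u n))).
  { apply (@ex_series_le R_AbsRing R_CompleteNormedModule _ (fun n => C * q ^ n)); auto.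
    intros n. unfold norm; simpl. unfold abs; simpl. rewrite Rabs_Rabsolu. auto. }
  eapply Rle_trans; [apply Series_Rabs; auto|].
  eapply Rle_trans; [apply (Series_le _ (fun n => C * q ^ n)); auto|].
  { intros n; split; [apply Rabs_pos| auto]. }
  rewrite Series_scal_l, Series_geom by (rewrite Rabs_right; lra). unfold Rdiv. lra.
Qed.

Lemma Rabs_PSeries_quarter_le M c : (forall n, majorized_upto n M c) ->
  Rabs (PSeries c (1/4)) <= 4 * M.
Proof.
  intros Hc. pose proof (majorized_upto_nonneg O M c (Hc O)).
  replace (4 * M) with (M / (1 - 3/4)) by field.
  apply Rabs_Series_le_geom; [lra|]. intros n.
  rewrite Rabs_mult, <- RPow_abs, (Rabs_right (1/4)) by lra.
  pose proof (Hc n n (le_n n)). pose proof (weight_le_1 n). pose proof (weight_pos n).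
  assert (0 <= (1/4) ^ n) by (apply pow_le; lra). assert (0 <= 3 ^ n) by (apply pow_le; lra).
  replace ((3/4) ^ n) with (3 ^ n * (1/4) ^ n) by (rewrite <- Rpow_mult_distr; f_equal; field).
  assert (0 <= M * 3 ^ n) by nra.
  apply Rle_trans with (M * 3 ^ n * weight n * (1/4) ^ n); [apply Rmult_le_compat_r; auto|].
  assert (M * 3 ^ n * weight n <= M * 3 ^ n) by nra. nra.
Qed.

Lemma Rabs_PSeries_derive_quarter_le M c : (forall n, majorized_upto n M c) ->
  Rabs (PSeries (PS_derive c) (1/4)) <= 12 * M.
Proof.
  intros Hc. pose proof (majorized_upto_nonneg O M c (Hc O)).
  replace (12 * M) with (3 * M / (1 - 3/4)) by field.
  apply Rabs_Series_le_geom; [lra|]. intros n. unfold PS_derive.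
  rewrite !Rabs_mult, <- RPow_abs, (Rabs_right (1/4)), (Rabs_right (INR (S n)))
    by (try apply Rle_ge, pos_INR; lra).
  pose proof (Hc (S n) (S n) (le_n _)).
  assert (Hw : INR (S n) * weight (S n) <= 1).
  { rewrite weight_S, S_INR. pose proof (pos_INR n).
    apply Rmult_le_reg_r with ((INR n + 2) ^ 2); [nra|].
    rewrite Rmult_assoc, Rinv_l by nra. nra. }
  assert (0 <= (1/4) ^ n) by (apply pow_le; lra). assert (0 <= 3 ^ n) by (apply pow_le; lra).
  pose proof (pos_INR (S n)).
  replace ((3/4) ^ n) with (3 ^ n * (1/4) ^ n) by (rewrite <- Rpow_mult_distr; f_equal; field).
  apply Rle_trans with (INR (S n) * (M * 3 ^ S n * weight (S n)) * (1/4) ^ n).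
  - apply Rmult_le_compat_r; auto. apply Rmult_le_compat_l; auto.
  - replace (INR (S n) * (M * 3 ^ S n * weight (S n)) * (1 / 4) ^ n) with
      ((3 * M * (3 ^ n * (1/4) ^ n)) * (INR (S n) * weight (S n))) by (simpl; ring).
    assert (0 <= 3 * M * (3 ^ n * (1/4) ^ n)) by (apply Rmult_le_pos; nra).
    rewrite <- (Rmult_1_r (3 * M * (3 ^ n * (1/4) ^ n))) at 2.
    apply Rmult_le_compat_l; auto.
Qed.

Section Estimates.

Variables sigma q0 : R.
Hypotheses (Hsigma : Rabs sigma <= 1) (Hq0 : 0 <= q0 <= 1/8).

Lemma PSeries_quarter_sub c d : Rbar_lt (1/4) (CV_radius c) -> Rbar_lt (1/4) (CV_radius d) ->
  PSeries c (1/4) - q0 * PSeries d (1/4) = PSeries (fun j => c j - q0 * d j) (1/4).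
Proof.
  intros Hc Hd.
  rewrite (PSeries_ext (fun j => c j - q0 * d j) (fun j => - q0 * d j + c j)) by (intros; ring).
  rewrite PSeries_scal_plus by (apply CV_radius_inside; rewrite Rabs_right by lra; auto). ring.
Qed.

Lemma sol_half_estimate : Rabs (sol sigma q0 (1/2) - q0 * Q0 (1/2)) <= 12 * 8 ^ 6 * q0 ^ 7.
Proof.
  rewrite sol_eq_PSeries_sq, Q0_eq_PSeries_sq by (auto; try apply Rabs_def1; lra).
  replace ((1/2) ^ 2) with (1/4) by field.
  rewrite PSeries_quarter_sub.
  - eapply Rle_trans; [apply Rabs_PSeries_quarter_le, sol_coef_sub_lin_majorized; auto|].
    assert (0 <= q0 ^ 7) by (apply pow_le; lra). lra.
  - rewrite <- (Rabs_right (1/4)) by lra. apply sol_coef_CV_radius; auto. apply Rabs_def1; lra.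
  - rewrite <- (Rabs_right (1/4)) by lra. apply lin_coef_CV_radius. apply Rabs_def1; lra.
Qed.

Lemma sol_derive_half_estimate Q1 : has_deriv_on 0 (1/2) (sol sigma q0) Q1 ->
  Rabs (Q1 (1/2) - q0 * Derive Q0 (1/2)) <= 12 * 8 ^ 6 * q0 ^ 7.
Proof.
  intros HQ1.
  assert (HF : has_deriv_on 0 (1/2) (sol sigma q0) (sol_derive sigma q0 1)).
  { apply has_deriv_on_is_derive. intros x Hx.
    apply (is_derive_sol_derive sigma q0 Hsigma Hq0 0). apply Rabs_def1; lra. }
  rewrite (has_deriv_on_unique 0 (1/2) _ _ _ (1/2) ltac:(lra) HQ1 HF) by lra.
  rewrite sol_derive_1, Derive_Q0_half by (auto; apply Rabs_def1; lra).
  replace ((1/2) ^ 2) with (1/4) by field. replace (2 * (1/2)) with 1 by field.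
  rewrite Rmult_1_l.
  rewrite PSeries_quarter_sub.
  - rewrite (PSeries_ext _ (PS_derive (fun j => sol_coef sigma q0 j - q0 * lin_coef j)))
      by (intros; unfold PS_derive; ring).
    replace (12 * 8 ^ 6 * q0 ^ 7) with (12 * (8 ^ 6 * q0 ^ 7)) by ring.
    apply Rabs_PSeries_derive_quarter_le, sol_coef_sub_lin_majorized; auto.
  - rewrite CV_radius_derive, <- (Rabs_right (1/4)) by lra.
    apply sol_coef_CV_radius; auto. apply Rabs_def1; lra.
  - rewrite CV_radius_derive, <- (Rabs_right (1/4)) by lra.
    apply lin_coef_CV_radius. apply Rabs_def1; lra.
Qed.

End Estimates.

Theorem lemma2p1 : forall sigma : R, (sigma = 1 \/ sigma = -1) ->
  exists eps, 0 < eps /\ exists C : R,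
  forall q0, 0 <= q0 <= eps ->
    exists Q : R -> R,
      is_solution sigma q0 Q /\
      (forall Q' : R -> R, is_solution sigma q0 Q' ->
         forall a, 0 <= a <= 1/2 -> Q' a = Q a) /\
      Rabs (Q (1/2) - q0 * Q0 (1/2)) <= C * q0 ^ 7 /\
      (forall Q1 : R -> R, has_deriv_on 0 (1/2) Q Q1 ->
         Rabs (Q1 (1/2) - q0 * Derive Q0 (1/2)) <= C * q0 ^ 7) /\
      (exists Qe : R -> R, smooth_on (-(1/2)) (1/2) Qe /\
         (forall a, -(1/2) <= a <= 1/2 -> Qe (- a) = Qe a) /\
         (forall a, 0 <= a <= 1/2 -> Qe a = Q a)).
Proof.
  intros sigma Hsig.
  assert (Hs : Rabs sigma <= 1) by (apply Rabs_le; destruct Hsig; lra).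
  exists (1/8). split; [lra|]. exists (12 * 8 ^ 6). intros q0 Hq.
  exists (sol sigma q0). split; [|split; [|split; [|split]]].
  - apply sol_is_solution; auto.
  - intros Q' HQ'. apply (is_solution_unique sigma q0); auto. apply sol_is_solution; auto.
  - apply sol_half_estimate; auto.
  - apply sol_derive_half_estimate; auto.
  - exists (sol sigma q0). split; [apply sol_smooth; auto; lra|]. split; [|auto].
    intros a Ha. apply sol_even; auto. apply Rabs_def1; lra.
Qed.
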